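(* Let $L_x, L_y > 0$ and $\mathcal{D} = (0,L_x)\times(0,L_y)$. For non-negative integers $m,n$ with $(m,n)\neq(0,0)$ let $\Phi_{mn}(x,y) = \cos(m\pi x/L_x)\cos(n\pi y/L_y)$ (up to a positive normalisation constant), with wavenumber $k_{mn} = \sqrt{(m\pi/L_x)^2 + (n\pi/L_y)^2}$, so that $-\Delta\Phi_{mn} = k_{mn}^2\Phi_{mn}$ in $\mathcal{D}$ and $\bm{n}\cdot\nabla\Phi_{mn} = 0$ on $\partial\mathcal{D}$. For $h>0$ let $\omega_{mn}(h) = \sqrt{k_{mn}\tanh(k_{mn} h)}$. Then there do not exist three such modes $\Psi_j = \Phi_{m_j n_j}$ ($j=1,2,3$), with wavenumbers $K_j = k_{m_j n_j}$ and frequencies $\Omega_j = \omega_{m_j n_j}$, together with a depth $h_c \in (0,\infty)$, such that both $\iint_{\mathcal{D}} \Psi_1\Psi_2\Psi_3\,\mathrm{d}A \neq 0$ and $\Omega_1(h_c) + \Omega_2(h_c) = \Omega_3(h_c)$. That is, resonant triads cannot exist in a rectangular cylinder of finite depth.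
   Context: A resonant triad in a cylinder with cross-section $\mathcal{D}$ and dimensionless fluid depth $h$ consists of three Neumann Laplacian eigenmodes $\Psi_1,\Psi_2,\Psi_3$ on $\mathcal{D}$ with positive wavenumbers $K_j$ (i.e. $-\Delta\Psi_j = K_j^2\Psi_j$) such that the correlation condition $\iint_{\mathcal{D}}\Psi_1\Psi_2\Psi_3\,\mathrm{d}A\neq 0$ holds and, at some critical depth $h_c\in(0,\infty)$, the angular frequencies $\Omega_j = \sqrt{K_j\tanh(K_j h_c)}$ satisfy $\Omega_1+\Omega_2=\Omega_3$ (other sign combinations reduce to this one by relabelling). *)

From Stdlib Require Import Reals.
From Coquelicot Require Import Coquelicot.
Open Scope R_scope.

Definition tanh (x : R) : R := (exp x - exp (- x)) / (exp x + exp (- x)).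

(* Neumann eigenmode of the rectangle (0,Lx) x (0,Ly), unnormalised *)
Definition Phi (Lx Ly : R) (m n : nat) (x y : R) : R :=
  cos (INR m * PI * x / Lx) * cos (INR n * PI * y / Ly).

Definition kmn (Lx Ly : R) (m n : nat) : R :=
  sqrt ((INR m * PI / Lx) ^ 2 + (INR n * PI / Ly) ^ 2).

Definition omega (Lx Ly : R) (m n : nat) (h : R) : R :=
  sqrt (kmn Lx Ly m n * tanh (kmn Lx Ly m n * h)).

(* area integral over the rectangle, as an iterated Riemann integral
   (integrands here are continuous, so this is the area integral) *)
Definition rect_integral (Lx Ly : R) (f : R -> R -> R) : R :=
  RInt (fun x => RInt (fun y => f x y) 0 Ly) 0 Lx.

(** The area integral of [Phi1 Phi2 Phi3] factorises into two one-dimensional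
    integrals of products of three cosines; by the product-to-sum formula these
    vanish unless [m3 <= m1 + m2] and [n3 <= n1 + n2], so a nonzero interaction
    coefficient forces [K3 <= K1 + K2] by the triangle inequality in the plane.
    On the other hand [w k = sqrt (k tanh (k h))] is nondecreasing and [w k / k]
    is strictly decreasing (tanh is strictly concave on [0, oo) and vanishes at
    0), so [w] is strictly subadditive: [Omega3 <= w (K1 + K2) < Omega1 + Omega2]. *)

From Pilot Require Import Defs.
From Stdlib Require Import Reals Rgeom Lra Lia Psatz.
From Coquelicot Require Import Coquelicot.
Open Scope R_scope.

Lemma tanh_0 : Defs.tanh 0 = 0.
Proof. unfold Defs.tanh; rewrite Ropp_0; unfold Rdiv; ring. Qed.

Lemma tanh_exp2 (x : R) : Defs.tanh x = 1 - 2 / (exp (2 * x) + 1).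
Proof.
  unfold Defs.tanh.
  replace (2 * x) with (x + x) by ring.
  rewrite exp_plus, exp_Ropp.
  assert (Hx := exp_pos x).
  field; split; nra.
Qed.

Lemma tanh_lt (x y : R) : x < y -> Defs.tanh x < Defs.tanh y.
Proof.
  intros Hxy; rewrite !tanh_exp2.
  assert (Hexp : exp (2 * x) < exp (2 * y)) by (apply exp_increasing; lra).
  assert (Hx := exp_pos (2 * x)).
  assert (/ (exp (2 * y) + 1) < / (exp (2 * x) + 1)) by (apply Rinv_lt_contravar; nra).
  unfold Rdiv; lra.
Qed.

Lemma tanh_le (x y : R) : x <= y -> Defs.tanh x <= Defs.tanh y.
Proof.
  intros [Hlt | ->]; [left; apply tanh_lt, Hlt | right; reflexivity].
Qed.

Lemma tanh_ge0 (x : R) : 0 <= x -> 0 <= Defs.tanh x.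
Proof. intros Hx; rewrite <- tanh_0; apply tanh_le, Hx. Qed.

Lemma tanh_derivative (t : R) : derivable_pt_lim Defs.tanh t (1 - Defs.tanh t ^ 2).
Proof.
  apply is_derive_Reals; unfold Defs.tanh.
  assert (A := exp_pos t); assert (B := exp_pos (- t)).
  auto_derive; [lra | field; lra].
Qed.

Lemma chord_slope_decreasing (f f' : R -> R) (x y : R) :
  (forall t, derivable_pt_lim f t (f' t)) -> f 0 = 0 ->
  (forall s t, 0 <= s < t -> f' t < f' s) ->
  0 < x < y -> x * f y < y * f x.
Proof.
  intros Df f0 f'_decr [Hx Hxy].
  destruct (MVT_cor2 f f' 0 x Hx (fun c _ => Df c)) as [c1 [E1 Hc1]].
  destruct (MVT_cor2 f f' x y Hxy (fun c _ => Df c)) as [c2 [E2 Hc2]].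
  assert (Hslopes : f' c2 < f' c1) by (apply f'_decr; lra).
  assert (0 < x * (y - x) * (f' c1 - f' c2)) by (repeat apply Rmult_lt_0_compat; lra).
  rewrite f0 in E1; nra.
Qed.

Lemma tanh_chord (x y : R) : 0 < x < y -> x * Defs.tanh y < y * Defs.tanh x.
Proof.
  apply (chord_slope_decreasing _ _ x y tanh_derivative tanh_0).
  intros s t Hst.
  assert (Hs := tanh_ge0 s (proj1 Hst)); assert (Hlt := tanh_lt s t (proj2 Hst)).
  nra.
Qed.

Definition dispersion (h k : R) : R := sqrt (k * Defs.tanh (k * h)).

Lemma dispersion_le (h k k' : R) :
  0 <= h -> 0 <= k <= k' -> dispersion h k <= dispersion h k'.
Proof.
  intros Hh [Hk Hkk]; apply sqrt_le_1_alt.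
  apply Rmult_le_compat; [lra | apply tanh_ge0; nra | lra | apply tanh_le; nra].
Qed.

Lemma dispersion_chord (h a b : R) :
  0 < h -> 0 < a < b -> a * dispersion h b < b * dispersion h a.
Proof.
  intros Hh [Ha0 Hab]; unfold dispersion.
  assert (Htanh := tanh_chord (a * h) (b * h) ltac:(split; nra)).
  assert (Hkey : a * Defs.tanh (b * h) < b * Defs.tanh (a * h)).
  { apply Rmult_lt_reg_l with h; [exact Hh | nra]. }
  assert (Ha := tanh_ge0 (a * h) ltac:(nra)); assert (Hb := tanh_ge0 (b * h) ltac:(nra)).
  apply Rsqr_incrst_0.
  - rewrite !Rsqr_mult, !Rsqr_sqrt by nra; unfold Rsqr.
    assert (0 < a * b) by nra; nra.
  - apply Rmult_le_pos; [lra | apply sqrt_pos].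
  - apply Rmult_le_pos; [lra | apply sqrt_pos].
Qed.

Lemma subadditive_of_chord_slope_decreasing (w : R -> R) (a b : R) :
  (forall x y, 0 < x < y -> x * w y < y * w x) ->
  0 < a -> 0 < b -> w (a + b) < w a + w b.
Proof.
  intros Hw Ha Hb.
  assert (Hwa := Hw a (a + b) ltac:(lra)); assert (Hwb := Hw b (a + b) ltac:(lra)).
  apply Rmult_lt_reg_l with (a + b); lra.
Qed.

Lemma dispersion_triangle (h K1 K2 K3 : R) :
  0 < h -> 0 < K1 -> 0 < K2 -> 0 <= K3 <= K1 + K2 ->
  dispersion h K3 < dispersion h K1 + dispersion h K2.
Proof.
  intros Hh H1 H2 H3.
  apply Rle_lt_trans with (dispersion h (K1 + K2)); [apply dispersion_le; lra|].
  apply subadditive_of_chord_slope_decreasing; auto.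
  intros x y; apply dispersion_chord, Hh.
Qed.

Lemma omega_dispersion (Lx Ly : R) (m n : nat) (h : R) :
  omega Lx Ly m n h = dispersion h (kmn Lx Ly m n).
Proof. reflexivity. Qed.

Definition cos_mode (L : R) (j : nat) (x : R) : R := cos (INR j * PI * x / L).

Lemma is_RInt_cos_mode (L : R) (j : nat) :
  0 < L -> (0 < j)%nat -> is_RInt (cos_mode L j) 0 L 0.
Proof.
  intros HL Hj.
  assert (Hj' : 0 < INR j) by (apply lt_0_INR, Hj).
  assert (HPI := PI_RGT_0).
  set (F x := sin (INR j * PI * x / L) * (L / (INR j * PI))).
  assert (HF : minus (F L) (F 0) = 0).
  { unfold F, minus, plus, opp; simpl.
    replace (INR j * PI * L / L) with (INR j * PI) by (field; lra).
    replace (INR j * PI * 0 / L) with 0 by (field; lra).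
    rewrite sin_0, sin_eq_0_1 by (exists (Z.of_nat j); rewrite INR_IZR_INZ; reflexivity).
    ring. }
  rewrite <- HF at 2.
  apply (is_RInt_derive (V := R_CompleteNormedModule) F).
  - intros x _; unfold F, cos_mode; auto_derive; auto.
    unfold Rdiv; field; repeat split; apply Rgt_not_eq; lra.
  - intros x _; apply (ex_derive_continuous (V := R_NormedModule)).
    unfold cos_mode; auto_derive; auto.
Qed.

Lemma cos_mul3 (A B C : R) :
  cos A * cos B * cos C =
  / 4 * (cos (A + B + C) + cos (C - A - B) + cos (A - B + C) + cos (B + C - A)).
Proof. unfold Rminus; rewrite !cos_plus, !sin_plus, !cos_neg, !sin_neg; field. Qed.

Definition cos_triple (L : R) (a b c : nat) (x : R) : R :=
  cos_mode L a x * cos_mode L b x * cos_mode L c x.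

Lemma ex_RInt_cos_triple (L : R) (a b c : nat) (u v : R) :
  0 < L -> ex_RInt (cos_triple L a b c) u v.
Proof.
  intros HL; apply (ex_RInt_continuous (V := R_CompleteNormedModule)).
  intros z _; apply (ex_derive_continuous (V := R_NormedModule)).
  unfold cos_triple, cos_mode; auto_derive; repeat split; auto.
Qed.

Lemma RInt_cos_triple_eq0 (L : R) (a b c : nat) :
  0 < L -> (a + b < c)%nat -> RInt (cos_triple L a b c) 0 L = 0.
Proof.
  intros HL Habc.
  (* all four frequencies of the product-to-sum expansion are positive integers *)
  rewrite (RInt_ext _ (fun x => / 4 * (cos_mode L (a + b + c) x + cos_mode L (c - a - b) x
                                     + cos_mode L (a + c - b) x + cos_mode L (b + c - a) x))).
  - rewrite (is_RInt_unique _ _ _ (/ 4 * (0 + 0 + 0 + 0))); [rewrite !Rplus_0_r; apply Rmult_0_r |].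
    apply (is_RInt_scal (V := R_NormedModule)).
    apply (is_RInt_plus (V := R_NormedModule));
      [apply (is_RInt_plus (V := R_NormedModule));
         [apply (is_RInt_plus (V := R_NormedModule)) |] |];
      apply is_RInt_cos_mode; auto; lia.
  - intros x _; unfold cos_triple, cos_mode; rewrite cos_mul3.
    rewrite !minus_INR, !plus_INR by lia.
    f_equal; repeat apply f_equal2; apply f_equal; field; lra.
Qed.

Lemma RInt_cos_triple_neq0 (L : R) (a b c : nat) :
  0 < L -> RInt (cos_triple L a b c) 0 L <> 0 -> (c <= a + b)%nat.
Proof.
  intros HL Hneq.
  destruct (Compare_dec.le_lt_dec c (a + b)) as [Hle | Hlt]; [exact Hle|].
  exfalso; apply Hneq, RInt_cos_triple_eq0; assumption.
Qed.

Lemma rect_integral_separable (Lx Ly : R) (f g : R -> R) :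
  ex_RInt f 0 Lx -> ex_RInt g 0 Ly ->
  rect_integral Lx Ly (fun x y => f x * g y) = RInt f 0 Lx * RInt g 0 Ly.
Proof.
  intros Hf Hg; unfold rect_integral.
  rewrite (RInt_ext _ (fun x => RInt g 0 Ly * f x)).
  - rewrite Rmult_comm; exact (RInt_scal (V := R_CompleteNormedModule) f 0 Lx _ Hf).
  - intros x _; rewrite Rmult_comm.
    exact (RInt_scal (V := R_CompleteNormedModule) g 0 Ly (f x) Hg).
Qed.

Lemma rect_integral_Phi_triple (Lx Ly : R) (m1 n1 m2 n2 m3 n3 : nat) :
  0 < Lx -> 0 < Ly ->
  rect_integral Lx Ly
    (fun x y => Phi Lx Ly m1 n1 x y * Phi Lx Ly m2 n2 x y * Phi Lx Ly m3 n3 x y)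
  = RInt (cos_triple Lx m1 m2 m3) 0 Lx * RInt (cos_triple Ly n1 n2 n3) 0 Ly.
Proof.
  intros HLx HLy.
  assert (Hsep : forall x y,
    Phi Lx Ly m1 n1 x y * Phi Lx Ly m2 n2 x y * Phi Lx Ly m3 n3 x y
    = cos_triple Lx m1 m2 m3 x * cos_triple Ly n1 n2 n3 y).
  { intros x y; unfold Phi, cos_triple, cos_mode; ring. }
  rewrite <- rect_integral_separable by (apply ex_RInt_cos_triple; assumption).
  unfold rect_integral; apply RInt_ext; intros x _; apply RInt_ext; intros y _.
  exact (Hsep x y).
Qed.

Lemma norm2_le_add (a1 b1 a2 b2 a3 b3 : R) :
  0 <= a3 <= a1 + a2 -> 0 <= b3 <= b1 + b2 ->
  sqrt (a3 ^ 2 + b3 ^ 2) <= sqrt (a1 ^ 2 + b1 ^ 2) + sqrt (a2 ^ 2 + b2 ^ 2).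
Proof.
  intros Ha Hb.
  assert (T := triangle (a1 + a2) (b1 + b2) 0 0 a2 b2); unfold dist_euc in T.
  rewrite !Rsqr_pow2, !Rminus_0_r in T.
  replace (a1 + a2 - a2) with a1 in T by ring; replace (b1 + b2 - b2) with b1 in T by ring.
  eapply Rle_trans, T; apply sqrt_le_1_alt; nra.
Qed.

Lemma mode_coordinate_le (L : R) (a b c : nat) :
  0 < L -> (c <= a + b)%nat -> 0 <= INR c * PI / L <= INR a * PI / L + INR b * PI / L.
Proof.
  intros HL Hc; apply le_INR in Hc; rewrite plus_INR in Hc.
  assert (Hp : 0 < PI / L) by (apply Rdiv_lt_0_compat; [apply PI_RGT_0 | exact HL]).
  assert (H0 := pos_INR c).
  unfold Rdiv in *; rewrite !Rmult_assoc; split; nra.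
Qed.

Lemma kmn_pos (Lx Ly : R) (m n : nat) :
  0 < Lx -> 0 < Ly -> (m, n) <> (0%nat, 0%nat) -> 0 < kmn Lx Ly m n.
Proof.
  intros HLx HLy Hmn; unfold kmn; apply sqrt_lt_R0.
  assert (Hpos : forall (L : R) (j : nat), 0 < L -> (0 < j)%nat -> 0 < INR j * PI / L).
  { intros L j HL Hj; apply Rdiv_lt_0_compat; [apply Rmult_lt_0_compat|]; auto.
    - apply lt_0_INR, Hj.
    - apply PI_RGT_0. }
  assert (Hx := pow2_ge_0 (INR m * PI / Lx)); assert (Hy := pow2_ge_0 (INR n * PI / Ly)).
  destruct m as [|m]; [destruct n as [|n]; [congruence|] |].
  - assert (Hn := Hpos Ly (S n) HLy ltac:(lia)); nra.
  - assert (Hm := Hpos Lx (S m) HLx ltac:(lia)); nra.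
Qed.

Lemma kmn_triangle (Lx Ly : R) (m1 n1 m2 n2 m3 n3 : nat) :
  0 < Lx -> 0 < Ly -> (m3 <= m1 + m2)%nat -> (n3 <= n1 + n2)%nat ->
  kmn Lx Ly m3 n3 <= kmn Lx Ly m1 n1 + kmn Lx Ly m2 n2.
Proof.
  intros HLx HLy Hm Hn; apply norm2_le_add; apply mode_coordinate_le; assumption.
Qed.

Theorem mainTheorem3 (Lx Ly : R) (HLx : 0 < Lx) (HLy : 0 < Ly)
  (m1 n1 m2 n2 m3 n3 : nat)
  (H1 : (m1, n1) <> (0%nat, 0%nat))
  (H2 : (m2, n2) <> (0%nat, 0%nat))
  (H3 : (m3, n3) <> (0%nat, 0%nat)) :
  ~ (exists hc : R, 0 < hc /\
       rect_integral Lx Ly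
         (fun x y => Phi Lx Ly m1 n1 x y * Phi Lx Ly m2 n2 x y * Phi Lx Ly m3 n3 x y)
         <> 0 /\
       omega Lx Ly m1 n1 hc + omega Lx Ly m2 n2 hc = omega Lx Ly m3 n3 hc).
Proof.
  intros [hc [Hh [Hint Hres]]].
  rewrite rect_integral_Phi_triple in Hint by assumption.
  destruct (Rmult_neq_0_reg _ _ Hint) as [Hx Hy].
  assert (Hk := kmn_triangle Lx Ly m1 n1 m2 n2 m3 n3 HLx HLy
                  (RInt_cos_triple_neq0 _ _ _ _ HLx Hx) (RInt_cos_triple_neq0 _ _ _ _ HLy Hy)).
  assert (Hlt := dispersion_triangle hc (kmn Lx Ly m1 n1) (kmn Lx Ly m2 n2) (kmn Lx Ly m3 n3)
                   Hh (kmn_pos _ _ _ _ HLx HLy H1) (kmn_pos _ _ _ _ HLx HLy H2)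
                   (conj (sqrt_pos _) Hk)).
  rewrite !omega_dispersion in Hres; lra.
Qed.
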